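(* Let $\alpha\in(0,1)$, $\gamma>0$, $a>0$, $b\in\mathbb R\setminus\{0\}$, and assume $\eta=0$. Then the operator $-\mathcal A$ is not invertible; consequently $0\in\sigma(\mathcal A)$.
   Context: Let $\mu(\xi)=|\xi|^{\frac{2\alpha-1}{2}}$ and $\kappa(\alpha)=\frac{\sin(\alpha\pi)}{\pi}$. Let $H^1_L(0,1)=\{u\in H^1(0,1):u(0)=0\}$. $\mathcal H=H^1_L(0,1)\times L^2(0,1)\times H^1_0(0,1)\times L^2(0,1)\times L^2(\mathbb R)$ with inner product $\langle(u,v,y,z,\omega),(\tilde u,\tilde v,\tilde y,\tilde z,\tilde\omega)\rangle_{\mathcal H}=\int_0^1(v\bar{\tilde v}+u_x\bar{\tilde u}_x+z\bar{\tilde z}+a y_x\bar{\tilde y}_x)dx+\gamma\kappa(\alpha)\int_{\mathbb R}\omega\bar{\tilde\omega}\,d\xi$. $D(\mathcal A)$ is the set of $(u,v,y,z,\omega)\in\mathcal H$ with $u\in H^2(0,1)\cap H^1_L(0,1)$, $y\in H^2(0,1)\cap H^1_0(0,1)$, $v\in H^1_L(0,1)$, $z\in H^1_0(0,1)$, $-(\xi^2+\eta)\omega+v(1)\mu(\xi)\in L^2(\mathbb R)$, $|\xi|\omega\in L^2(\mathbb R)$, $u_x(1)+\gamma\kappa(\alpha)\int_{\mathbb R}\mu(\xi)\omega(\xi)d\xi=0$, and $\mathcal A(u,v,y,z,\omega)=(v,\,u_{xx}-bz,\,z,\,ay_{xx}+bv,\,-(\xi^2+\eta)\omega+v(1)\mu(\xi))$.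 *)

From HB Require Import structures.
From mathcomp Require Import all_boot all_order all_algebra.
From mathcomp Require Import all_classical all_reals all_analysis.
From mathcomp Require Import complex.
Set Implicit Arguments. Unset Strict Implicit. Unset Printing Implicit Defensive.
Import Order.TTheory GRing.Theory Num.Theory.
Import numFieldNormedType.Exports.
Local Open Scope classical_set_scope.
Local Open Scope ring_scope.
Local Open Scope complex_scope.

Section Defs.
Variable R : realType.
Notation C := (R[i]).
Notation leb := (@lebesgue_measure R).

Definition cre (z : C) : R := complex.Re z.
Definition cim (z : C) : R := complex.Im z.

Definition cmeas (D : set R) (f : R -> C) :=
  measurable_fun D (fun x => cre (f x)) /\ measurable_fun D (fun x => cim (f x)).

Definition L2on (D : set R) (f : R -> C) :=
  cmeas D f /\
  leb.-integrable D (fun x => ((cre (f x)) ^+ 2 + (cim (f x)) ^+ 2)%:E).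

Definition L1on (D : set R) (f : R -> C) :=
  leb.-integrable D (fun x => (cre (f x))%:E) /\
  leb.-integrable D (fun x => (cim (f x))%:E).

Definition cint (D : set R) (f : R -> C) : C :=
  complex.Complex (\int[leb]_(x in D) cre (f x))%R (\int[leb]_(x in D) cim (f x))%R.

Definition aeq (D : set R) (f g : R -> C) :=
  {ae leb, forall x, D x -> f x = g x}.

(** [H1rep u ux]: u (its continuous representative on [0,1]) belongs to
    H^1(0,1) with weak derivative ux, i.e. ux is in L^2(0,1) and
    u x = u 0 + int_0^x ux for all x in [0,1]. *)
Definition H1rep (u ux : R -> C) :=
  L2on `[0, 1] ux /\
  forall x, 0 <= x <= 1 -> u x = u 0 + cint `[0, x] ux.

Definition kappa (alpha : R) : R := sin (alpha * pi) / pi.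
Definition mu (alpha : R) (xi : R) : R := `|xi| `^ ((2 * alpha - 1) / 2).

(** A state (u, v, y, z, omega); components are representatives of
    functions on (0,1) (first four) and on the real line (omega). *)
Record state := State { st_u : R -> C; st_v : R -> C; st_y : R -> C;
                        st_z : R -> C; st_w : R -> C }.

Definition inH (U : state) :=
  [/\ (exists ux, H1rep (st_u U) ux) /\ st_u U 0 = 0,
      L2on `[0, 1] (st_v U),
      (exists yx, H1rep (st_y U) yx) /\ st_y U 0 = 0 /\ st_y U 1 = 0,
      L2on `[0, 1] (st_z U) &
      L2on setT (st_w U)].

Definition eqH (U V : state) :=
  [/\ aeq `[0, 1] (st_u U) (st_u V), aeq `[0, 1] (st_v U) (st_v V),
      aeq `[0, 1] (st_y U) (st_y V), aeq `[0, 1] (st_z U) (st_z V) &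
      aeq setT (st_w U) (st_w V)].

Definition negH (U : state) : state :=
  State (fun x => - st_u U x) (fun x => - st_v U x) (fun x => - st_y U x)
        (fun x => - st_z U x) (fun x => - st_w U x).

Definition Aw (alpha eta : R) (U : state) : R -> C :=
  fun xi => - ((xi ^+ 2 + eta)%:C * st_w U xi) + st_v U 1 * (mu alpha xi)%:C.

Definition DAwit (alpha gamma eta : R) (U : state) (ux uxx yx yxx : R -> C) :=
  [/\ H1rep (st_u U) ux /\ H1rep ux uxx /\ st_u U 0 = 0,
      H1rep (st_y U) yx /\ H1rep yx yxx /\ st_y U 0 = 0 /\ st_y U 1 = 0,
      (exists vx, H1rep (st_v U) vx) /\ st_v U 0 = 0,
      (exists zx, H1rep (st_z U) zx) /\ st_z U 0 = 0 /\ st_z U 1 = 0 &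
      [/\ L2on setT (st_w U),
          L2on setT (Aw alpha eta U),
          L2on setT (fun xi => (`|xi|)%:C * st_w U xi),
          L1on setT (fun xi => (mu alpha xi)%:C * st_w U xi) &
          ux 1 + (gamma * kappa alpha)%:C *
                 cint setT (fun xi => (mu alpha xi)%:C * st_w U xi) = 0]].

Definition inDA (alpha gamma eta : R) (U : state) :=
  exists ux uxx yx yxx, DAwit alpha gamma eta U ux uxx yx yxx.

Definition Aeq (alpha gamma a b eta : R) (U F : state) :=
  exists ux uxx yx yxx, DAwit alpha gamma eta U ux uxx yx yxx /\
  [/\ aeq `[0, 1] (st_u F) (st_v U),
      aeq `[0, 1] (st_v F) (fun x => uxx x - b%:C * st_z U x),
      aeq `[0, 1] (st_y F) (st_z U),
      aeq `[0, 1] (st_z F) (fun x => a%:C * yxx x + b%:C * st_v U x) &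
      aeq setT (st_w F) (Aw alpha eta U)].

Definition negA_invertible (alpha gamma a b eta : R) :=
  (forall F, inH F -> exists U, inDA alpha gamma eta U /\
                               Aeq alpha gamma a b eta U (negH F)) /\
  (forall U U' F, Aeq alpha gamma a b eta U F ->
                  Aeq alpha gamma a b eta U' F -> eqH U U').

End Defs.

(* For eta = 0 the last component of -A U = F reads xi^2 omega(xi) = f(xi) + v(1) mu(xi).
   Take F = (0, 0, 0, 0, 1_[0,1]) in H.  If v(1) = 0 then |omega|^2 = xi^-4 on (0, 1];
   otherwise, since mu(xi) >= |xi| for |xi| <= 1, |omega|^2 >= |v(1)|^2 xi^-2 on [-1, 0).
   In both cases omega is not square integrable near 0, so F has no preimage in D(A). *)
From mathcomp Require Import all_boot all_order all_algebra.
From mathcomp Require Import all_classical all_reals all_analysis.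
From mathcomp Require Import complex measurable_realfun ring lra.
Set Implicit Arguments.
Unset Strict Implicit.
Unset Printing Implicit Defensive.
Import Order.TTheory GRing.Theory Num.Theory.
Local Open Scope classical_set_scope.
Local Open Scope ring_scope.
Local Open Scope complex_scope.

(* The library's [Filter] hint for [almost_everywhere] does not fire on [lebesgue_measure]. *)
#[local] Instance lebesgue_ae_filter (R : realType) :
  Filter (nbhs (almost_everywhere (@lebesgue_measure R))) :=
  ae_filter_ringOfSetsType _.

Section NonInvertibility.
Variable R : realType.
Notation C := (R[i]).
Notation leb := (@lebesgue_measure R).

Definition sqnormc (z : C) : R := cre z ^+ 2 + cim z ^+ 2.

Lemma sqnormc_ge0 (z : C) : 0 <= sqnormc z.
Proof. by rewrite addr_ge0 ?sqr_ge0. Qed.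

Lemma sqnormc_gt0 (z : C) : z != 0 -> 0 < sqnormc z.
Proof.
case: z => zr zi nz; rewrite lt_neqAle sqnormc_ge0 andbT eq_sym.
apply: contra nz; rewrite paddr_eq0 ?sqr_ge0 // !sqrf_eq0.
by case/andP => /eqP /= -> /eqP ->.
Qed.

Lemma sqnormcMr (z : C) (r : R) : sqnormc (z * r%:C) = sqnormc z * r ^+ 2.
Proof. case: z => zr zi; rewrite /sqnormc /cre /cim; simpc => /=; ring. Qed.

Lemma sqnormc1 : sqnormc 1 = 1.
Proof. by rewrite /sqnormc /cre /cim /= expr0n addr0 expr1n. Qed.

Lemma sqnormc_ge_of_sqr_mul_eq1 (x : R) (z : C) :
  0 < x <= 1 -> (x ^+ 2)%:C * z = 1 -> 1 <= x ^+ 2 * sqnormc z.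
Proof.
move=> /andP[x_gt0 x_le1] /(congr1 sqnormc); rewrite mulrC sqnormcMr sqnormc1 => zE.
have x2_gt0 : 0 < x ^+ 2 by rewrite exprn_gt0.
nra.
Qed.

Lemma sqnormc_ge_of_sqr_mul_eq_scale (x m : R) (z c : C) :
  x != 0 -> `|x| <= m -> (x ^+ 2)%:C * z = c * m%:C -> sqnormc c <= x ^+ 2 * sqnormc z.
Proof.
move=> x_neq0 x_le_m /(congr1 sqnormc); rewrite mulrC !sqnormcMr => zE.
have x2_gt0 : 0 < x ^+ 2 by rewrite exprn_even_gt0.
have x2_le : x ^+ 2 <= m ^+ 2.
  by rewrite -real_normK ?num_real // ler_sqr ?nnegrE // (le_trans _ x_le_m).
have := sqnormc_ge0 c; nra.
Qed.

Lemma mu_ge_norm (alpha x : R) : alpha <= 3 / 2 -> `|x| <= 1 -> `|x| <= mu alpha x.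
Proof.
move=> alpha_le x_le1; have [->|x_neq0] := eqVneq x 0; first by rewrite normr0 powR_ge0.
rewrite /mu -{1}(powRr1 (normr_ge0 x)); apply: ger_powR; last lra.
by rewrite normr_gt0 x_neq0.
Qed.

Lemma ge0_integral_ge_mass (g : R -> \bar R) (A : set R) (c : R) :
  measurable A -> 0 <= c -> measurable_fun setT g -> (forall x, (0 <= g x)%E) ->
  {ae leb, forall x, A x -> (c%:E <= g x)%E} ->
  (c%:E * leb A <= \int[leb]_x g x)%E.
Proof.
move=> mA c_ge0 mg g_ge0 g_ge; rewrite -integral_cst //.
apply: le_trans (ge0_subset_integral leb mA measurableT mg (fun x _ => g_ge0 x) (@subsetT _ _)).
by apply: ae_ge0_le_integral => //; exact: measurable_funS mg.
Qed.

Lemma not_integrable_inv_sqr (g : R -> R) (K : R) (D : set R) (A : nat -> set R) :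
  0 < K -> (forall x, 0 <= g x) ->
  (forall n, measurable (A n)) -> (forall n, leb (A n) = (n.+1%:R^-1)%:E) ->
  (forall n, A n `<=` D) -> (forall n x, A n x -> x ^+ 2 <= n.+1%:R ^- 2) ->
  {ae leb, forall x, D x -> K <= x ^+ 2 * g x} ->
  ~ leb.-integrable setT (EFin \o g).
Proof.
move=> K_gt0 g_ge0 mA AE AD A_small g_ge.
have g_geA n : {ae leb, forall x, A n x -> ((K * n.+1%:R ^+ 2)%:E <= (g x)%:E)%E}.
  apply: filterS g_ge => x g_geK /[dup] /A_small x_small /AD /g_geK.
  rewrite lee_fin -ler_pdivlMr ?exprn_gt0 // => /le_trans; apply.
  by rewrite mulrC ler_wpM2l.
have gE_ge0 x : (0 <= (g x)%:E)%E by rewrite lee_fin.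
move=> /integrableP[mg]; under eq_integral => x _ do rewrite /= ger0_norm //.
move=> int_fin.
have mass n : K * n.+1%:R <= fine (\int[leb]_x (g x)%:E).
  have c_ge0 : 0 <= K * n.+1%:R ^+ 2 by rewrite mulr_ge0 ?ltW.
  have := ge0_integral_ge_mass (mA n) c_ge0 mg gE_ge0 (g_geA n).
  rewrite AE -EFinM expr2 mulrA mulfK ?pnatr_eq0 //.
  by rewrite -lee_fin fineK // ge0_fin_numE ?integral_ge0.
have := mass (Num.truncn (fine (\int[leb]_x (g x)%:E) / K)).
by rewrite -ler_pdivlMl // mulrC leNgt truncnS_gt.
Qed.

Lemma not_L2on_inv_sqr_pos (w : R -> C) (K : R) : 0 < K ->
  {ae leb, forall x, 0 < x <= 1 -> K <= x ^+ 2 * sqnormc (w x)} -> ~ L2on setT w.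
Proof.
move=> K_gt0 w_ge [_].
apply: (not_integrable_inv_sqr (D := fun x => 0 < x <= 1)
  (A := fun n => [set` `]0, n.+1%:R^-1]]) K_gt0 (fun x => sqnormc_ge0 (w x)) _ _ _ _ w_ge).
- by [].
- by move=> n; rewrite lebesgue_measure_itv /= lte_fin invr_gt0 ltr0n /= oppr0 adde0.
- move=> n x /=; rewrite in_itv /= => /andP[x_gt0 x_le].
  by rewrite x_gt0 (le_trans x_le) // invf_le1 ?ler1n ?ltr0n.
- move=> n x /=; rewrite in_itv /= -exprVn => /andP[x_gt0 x_le].
  by rewrite ler_sqr ?nnegrE ?invr_ge0 // ltW.
Qed.

Lemma not_L2on_inv_sqr_neg (w : R -> C) (K : R) : 0 < K ->
  {ae leb, forall x, -1 <= x < 0 -> K <= x ^+ 2 * sqnormc (w x)} -> ~ L2on setT w.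
Proof.
move=> K_gt0 w_ge [_].
apply: (not_integrable_inv_sqr (D := fun x => -1 <= x < 0)
  (A := fun n => [set` `[- n.+1%:R^-1, 0[]) K_gt0 (fun x => sqnormc_ge0 (w x)) _ _ _ _ w_ge).
- by [].
- move=> n; rewrite lebesgue_measure_itv /= lte_fin oppr_lt0 invr_gt0 ltr0n /=.
  by rewrite add0e opprK.
- move=> n x /=; rewrite in_itv /= => /andP[x_ge x_lt0].
  by rewrite x_lt0 andbT (le_trans _ x_ge) // lerN2 invf_le1 ?ler1n ?ltr0n.
- move=> n x /=; rewrite in_itv /= -exprVn => /andP[x_ge x_lt0].
  by rewrite -sqrrN ler_sqr ?nnegrE ?invr_ge0 ?oppr_ge0 ?(ltW x_lt0) // lerNl.
Qed.

Definition indic01 (x : R) : C := (\1_`[0, 1] x : R)%:C.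

Lemma not_L2on_sqr_mul_eq_indic01_mu (alpha : R) (c : C) (w : R -> C) : alpha <= 3 / 2 ->
  {ae leb, forall x, (x ^+ 2)%:C * w x = indic01 x + c * (mu alpha x)%:C} ->
  ~ L2on setT w.
Proof.
move=> alpha_le w_eq; have [c_eq0 | c_neq0] := eqVneq c 0.
- apply: (not_L2on_inv_sqr_pos ltr01); apply: filterS w_eq => x + x_01.
  rewrite c_eq0 mul0r addr0 /indic01 indicE mem_set; last first.
    by move: x_01; rewrite /= in_itv /= => /andP[/ltW-> ->].
  exact: sqnormc_ge_of_sqr_mul_eq1.
- apply: (not_L2on_inv_sqr_neg (sqnormc_gt0 c_neq0)); apply: filterS w_eq => x + /andP[x_ge x_lt0].
  rewrite /indic01 indicE memNset ?add0r; last by rewrite /= in_itv /= leNgt x_lt0.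
  apply: sqnormc_ge_of_sqr_mul_eq_scale; first by rewrite lt_eqF.
  by rewrite mu_ge_norm // ltr0_norm // lerNl.
Qed.

Lemma L2on_cst0 (D : set R) : measurable D -> L2on D (fun=> 0 : C).
Proof.
move=> mD; split; first by split; exact: measurable_cst.
apply: (eq_integrable _ (cst 0%E)) => //; last exact: integrable0.
by move=> x _; rewrite /cre /cim /= expr0n addr0.
Qed.

Lemma H1rep_cst0 : H1rep (fun=> 0 : C) (fun=> 0).
Proof.
split=> [|x _]; first exact: L2on_cst0.
by rewrite add0r /cint /cre /cim /= !Rintegral_cst //= !mul0r.
Qed.

Definition indic01_state : state R :=
  State (fun=> 0) (fun=> 0) (fun=> 0) (fun=> 0) indic01.

Lemma inH_indic01_state : inH indic01_state.
Proof.
have H1_0 : exists ux, H1rep (fun=> 0 : C) ux by exists (fun=> 0); exact: H1rep_cst0.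
split=> //=; try exact: L2on_cst0.
split; first by split; [exact: measurable_indic | exact: measurable_cst].
apply: eq_integrable (integrable_indic_itv 0 1 true false) => // x _.
rewrite /cre /cim /indic01 /= expr0n addr0.
by rewrite /indic; case: (_ \in _); rewrite /= ?expr1n ?expr0n.
Qed.

Lemma Aw0_eq (alpha x : R) (U : state R) (f : C) :
  - f = Aw alpha 0 U x -> (x ^+ 2)%:C * st_w U x = f + st_v U 1 * (mu alpha x)%:C.
Proof. by rewrite /Aw addr0 => fE; rewrite -[f]opprK fE opprD opprK subrK. Qed.

End NonInvertibility.

Theorem lemma2p6 (R : realType) (alpha gamma a b : R) :
  0 < alpha < 1 -> 0 < gamma -> 0 < a -> b != 0 ->
  ~ negA_invertible alpha gamma a b 0.
Proof.
move=> /andP[_ alpha_lt1] _ _ _ [solvable _].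
have [U [_ [ux [uxx [yx [yxx [[_ _ _ _ [L2w _ _ _ _]] [_ _ _ _ w_eq]]]]]]]] :=
  solvable _ (inH_indic01_state R).
apply: (not_L2on_sqr_mul_eq_indic01_mu (alpha := alpha) (c := st_v U 1) _ _ L2w); first lra.
by apply: filterS w_eq => x /(_ I) /Aw0_eq.
Qed.
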